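(* Let $\mathrm{BS}$ be the Biggs-Smith graph and let $A=\{1a,\dots,17a\}$, $B=\{1b,\dots,17b\}$, $C$, $D$, $E$, $F$ be defined analogously, and $H_i=\{ia,ib,ic,id,ie,if\}$. The automorphisms of $\mathrm{BS}$ that preserve the partition of $V(\mathrm{BS})$ into $A,B,C,D,E,F$ (i.e. map each part onto a part) correspond to permutations of the sets $H_i$, $i\in[17]$. They are in bijective correspondence with the permutations of $[17]$ that can be written uniquely as a product $\alpha\phi_k$ of a dihedral permutation $\alpha\in D_{17}$ (acting on $[17]$ viewed as $\mathbb{Z}_{17}$ in cyclic order) and a permutation $\phi_k:i\mapsto ki \pmod{17}$ with $k\in\{1,2,4,8\}$ (where $0$ is written as $17$). The automorphism corresponding to $\alpha\phi_k$ maps each of $A,\dots,F$ to itself if $k=1$, interchanges $A$ with $B$ and $C$ with $D$ if $k=4$, and interchanges $E$ with $F$ (and $\{A,B\}$ with $\{C,D\}$) if $k=2$ or $k=8$.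
   Context: The Biggs-Smith graph $\mathrm{BS}$ is the cubic graph on the $102$ vertices $ia,ib,ic,id,ie,if$ for $i\in\{1,\dots,17\}$ (indices taken modulo 17, with $0$ written as $17$), whose edges are: $ie\,ia$, $ie\,ib$, $ie\,if$, $if\,ic$, $if\,id$ for each $i$; and $ia\,(i+1)a$, $ib\,(i+4)b$, $ic\,(i+2)c$, $id\,(i+8)d$ for each $i$. $D_{17}$ denotes the dihedral group of order 34 acting on $\mathbb{Z}_{17}$ by maps $i\mapsto \pm i+c$. *)

From mathcomp Require Import all_boot all_order all_algebra all_fingroup.
Set Implicit Arguments. Unset Strict Implicit. Unset Printing Implicit Defensive.
Import GRing.Theory.
Local Open Scope ring_scope.

(* Vertex (i, x) of the Biggs-Smith graph: i : 'Z_17 is the index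
   (index 17 of the paper is 0 here), x : 'I_6 is the letter
   a,b,c,d,e,f = 0,1,2,3,4,5. *)
Definition V : finType := ('Z_17 * 'I_6)%type.

Definition la : 'I_6 := @Ordinal 6 0 erefl.
Definition lb : 'I_6 := @Ordinal 6 1 erefl.
Definition lc : 'I_6 := @Ordinal 6 2 erefl.
Definition ld : 'I_6 := @Ordinal 6 3 erefl.
Definition le : 'I_6 := @Ordinal 6 4 erefl.
Definition lf : 'I_6 := @Ordinal 6 5 erefl.

Definition bs_base (u v : V) : bool :=
  let: (i, x) := u in let: (j, y) := v in
  [|| [&& x == le, y == la & j == i],
      [&& x == le, y == lb & j == i],
      [&& x == le, y == lf & j == i],
      [&& x == lf, y == lc & j == i],
      [&& x == lf, y == ld & j == i],
      [&& x == la, y == la & j == i + 1],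
      [&& x == lb, y == lb & j == i + 4%:R],
      [&& x == lc, y == lc & j == i + 2%:R] |
      [&& x == ld, y == ld & j == i + 8%:R]].

Definition bs_adj (u v : V) : bool := bs_base u v || bs_base v u.

Definition is_bs_aut (g : {perm V}) : Prop :=
  forall u v, bs_adj (g u) (g v) = bs_adj u v.

Definition Part (x : 'I_6) : {set V} := [set v : V | v.2 == x].
Definition H (i : 'Z_17) : {set V} := [set v : V | v.1 == i].

Definition part_pres (g : {perm V}) : Prop :=
  forall x, exists y, g @: Part x = Part y.

Definition induces (g : {perm V}) (pi : 'Z_17 -> 'Z_17) : Prop :=
  forall i, g @: H i = H (pi i).

Definition dihedral (alpha : 'Z_17 -> 'Z_17) : Prop :=
  exists s c : 'Z_17, (s = 1 \/ s = -1) /\ forall i, alpha i = s * i + c.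

Definition kset : seq 'Z_17 := [:: 1; 2%:R; 4%:R; 8%:R].

Definition phi (k : 'Z_17) (i : 'Z_17) : 'Z_17 := k * i.

Definition is_prod (pi : 'Z_17 -> 'Z_17) (alpha : 'Z_17 -> 'Z_17) (k : 'Z_17) : Prop :=
  dihedral alpha /\ k \in kset /\ forall i, pi i = alpha (phi k i).

Definition in_P (pi : 'Z_17 -> 'Z_17) : Prop := exists alpha k, is_prod pi alpha k.

From mathcomp Require Import all_boot all_order all_algebra all_fingroup.
Import GRing.Theory.
Set Implicit Arguments.
Unset Strict Implicit.
Unset Printing Implicit Defensive.
Local Open Scope ring_scope.

(* A partition-preserving automorphism g permutes the letters by some q, and
   since the voltage-0 tree edges join distinct letters inside one H_i, it has
   the form (i, x) |-> (p i, q x).  The a-cycle i -- i+1 is mapped onto an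
   injective walk with steps +-M, so p is affine, p i = D i + c.  Hence (D, q)
   is an automorphism of the voltage graph of BS, and a finite check shows
   D = +-k with k in {1, 2, 4, 8} and q determined by k; conversely each such
   pair lifts to an automorphism. *)

Lemma Zp_two_neq0 n : (2 < n)%N -> (1 + 1 : 'Z_n) != 0.
Proof.
move=> n_gt2; apply/eqP => two0.
by have := val_Zp_nat (ltnW n_gt2) 2; rewrite [2%:R]two0 modn_small.
Qed.

(* An injective walk on Z_n with steps +-M cannot undo a step, since that
   would revisit a point; hence all its steps are equal. *)
Lemma affine_of_pm_steps n (p : 'Z_n -> 'Z_n) (M : 'Z_n) : (2 < n)%N ->
    injective p -> (forall i, p (i + 1) - p i \in [:: M; - M]) ->
  forall i, p i = (p 1 - p 0) * i + p 0.
Proof.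
move=> n_gt2 p_inj steps; pose dp i := p (i + 1) - p i.
have dpS i : dp (i + 1) = dp i.
  have no_backtrack : dp (i + 1) != - dp i.
    move: (Zp_two_neq0 n_gt2); apply: contraNneq => back; apply/eqP.
    apply: (addrI i); rewrite addr0; apply/p_inj.
    by rewrite addrA -[LHS](subrK (p (i + 1))) -/(dp (i + 1)) back /dp opprB subrK.
  move: (steps i) (steps (i + 1)) no_backtrack; rewrite -/(dp i) -/(dp (i + 1)).
  by rewrite !inE => /orP[]/eqP-> /orP[]/eqP->; rewrite ?opprK ?eqxx.
have dp_nat k : dp k%:R = dp 0 by elim: k => // k IHk; rewrite -natr1 dpS.
have p_nat k : p k%:R = dp 0 *+ k + p 0.
  elim: k => [|k IHk]; first by rewrite add0r.
  by rewrite -natr1 -[LHS](subrK (p k%:R)) -/(dp k%:R) dp_nat IHk mulrS addrA.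
by move=> i; rewrite -[in LHS](natr_Zp i) p_nat -mulr_natr natr_Zp /dp add0r.
Qed.

Definition letters : seq 'I_6 := [:: la; lb; lc; ld; le; lf].
Definition residues : seq 'Z_17 := [seq inZp n | n <- iota 0 17].

Lemma mem_letters x : x \in letters.
Proof. by case: x => [[|[|[|[|[|[|n]]]]]] x_lt]. Qed.

Lemma mem_residues (i : 'Z_17) : i \in residues.
Proof.
apply/mapP; exists (val i); first by rewrite mem_iota /= add0n; exact: ltn_ord.
by apply/val_inj; rewrite /= modn_small //; exact: ltn_ord.
Qed.

Lemma all_lettersP (P : pred 'I_6) : reflect (forall x, P x) (all P letters).
Proof.
apply: (iffP allP) => [P_all x | P_all x _]; last exact: P_all.
exact: P_all (mem_letters x).
Qed.

Lemma all_residuesP (P : pred 'Z_17) : reflect (forall i, P i) (all P residues).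
Proof.
apply: (iffP allP) => [P_all i | P_all i _]; last exact: P_all.
exact: P_all (mem_residues i).
Qed.

Lemma nth_map_letters (T : Type) (t0 : T) (f : 'I_6 -> T) (x : 'I_6) :
  nth t0 (map f letters) x = f x.
Proof. by case: x => [[|[|[|[|[|[|n]]]]]] x_lt] //=; congr f; apply: val_inj. Qed.

(* BS is the Z_17-lift of a voltage graph on the letters: the tree with edges
   x -- parent x (rooted at e, which is its own parent) of voltage 0, and a
   loop of voltage loop_volt x at each of a, b, c, d (voltage 0 at e, f means
   no loop). *)
Definition parent (x : 'I_6) : 'I_6 := nth le [:: le; le; lf; lf] x.
Definition loop_volt (x : 'I_6) : 'Z_17 := inZp (nth 0 [:: 1; 4; 2; 8] x).

Definition lift_adj (x y : 'I_6) (d : 'Z_17) : bool :=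
  if x == y then (d != 0) && (d \in [:: loop_volt x; - loop_volt x])
  else (d == 0) && ((parent x == y) || (parent y == x)).

Lemma lift_adjN x y d : lift_adj x y (- d) = lift_adj x y d.
Proof. by rewrite /lift_adj oppr_eq0 !inE eqr_oppLR eqr_opp orbC. Qed.

Lemma bs_base_shift i j x y t :
  bs_base (i + t, x) (j + t, y) = bs_base (i, x) (j, y).
Proof.
have shiftE a b : (a + t == b + t) = (a == b) := inj_eq (@addIr _ t) a b.
have shift_stepE a b c : (a + t == b + t + c) = (a == b + c).
  by rewrite addrAC shiftE.
by rewrite /bs_base !shift_stepE !shiftE.
Qed.

Lemma bs_adj_origin : all (fun d => all (fun x => all (fun y =>
  bs_adj (0, x) (d, y) == lift_adj x y d) letters) letters) residues.
Proof. by vm_compute. Qed.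

Lemma bs_adjE u v : bs_adj u v = lift_adj u.2 v.2 (v.1 - u.1).
Proof.
case: u v => [i x] [j y] /=.
rewrite /bs_adj -(bs_base_shift i j x y (- i)) -(bs_base_shift j i y x (- i)) subrr.
apply/eqP; move: bs_adj_origin => /all_residuesP/(_ (j - i)).
by move=> /all_lettersP/(_ x)/all_lettersP/(_ y).
Qed.

Definition prod_fun (p : {perm 'Z_17}) (q : {perm 'I_6}) (v : V) : V :=
  (p v.1, q v.2).

Lemma prod_fun_inj p q : injective (prod_fun p q).
Proof. by move=> [i x] [j y] [] /perm_inj-> /perm_inj->. Qed.

Definition prod_perm p q : {perm V} := perm (@prod_fun_inj p q).

Lemma prod_permE p q v : prod_perm p q v = (p v.1, q v.2).
Proof. by rewrite permE. Qed.

Lemma prod_perm_Part p q x : prod_perm p q @: Part x = Part (q x).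
Proof.
apply/setP => -[j y]; rewrite inE /=; apply/imsetP/eqP => [[[i z]]|->].
  by rewrite inE /= => /eqP-> ; rewrite prod_permE => -[_ ->].
by exists ((p^-1)%g j, x); rewrite ?inE // prod_permE /= permKV.
Qed.

Lemma prod_perm_H p q i : prod_perm p q @: H i = H (p i).
Proof.
apply/setP => -[j y]; rewrite inE /=; apply/imsetP/eqP => [[[i' z]]|->].
  by rewrite inE /= => /eqP-> ; rewrite prod_permE => -[-> _].
by exists (i, (q^-1)%g y); rewrite ?inE // prod_permE /= permKV.
Qed.

Lemma bs_adj_prod_perm p q u v :
  bs_adj (prod_perm p q u) (prod_perm p q v)
  = lift_adj (q u.2) (q v.2) (p v.1 - p u.1).
Proof. by rewrite !prod_permE bs_adjE. Qed.

Lemma H_inj : injective H.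
Proof.
move=> i j Hij; have : (i, la) \in H j by rewrite -Hij inE.
by rewrite inE => /eqP.
Qed.

Lemma part_pres_letter_perm g : part_pres g ->
  exists q : {perm 'I_6}, forall v, (g v).2 = q v.2.
Proof.
move=> g_pres.
have inPart v x : (g v \in g @: Part x) = (v.2 == x).
  by rewrite mem_imset ?inE //; exact: perm_inj.
have letterE v : (g v).2 = (g (0, v.2)).2.
  have [y gPart] := g_pres v.2.
  move: (inPart v v.2) (inPart (0, v.2) v.2).
  by rewrite gPart !inE !eqxx => /eqP-> /eqP->.
have q_inj : injective (fun x => (g (0, x)).2).
  move=> x y /= gxy; apply/eqP; have [z gPart] := g_pres y.
  rewrite -(inPart (0, x)) gPart inE /= gxy.
  by have := inPart (0, y) y; rewrite gPart inE eqxx => ->.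
by exists (perm q_inj) => v; rewrite permE letterE.
Qed.

Lemma aut_index_letter_free g (q : {perm 'I_6}) : is_bs_aut g ->
  (forall v, (g v).2 = q v.2) -> forall i x, (g (i, x)).1 = (g (i, le)).1.
Proof.
move=> g_aut gq i.
have to_parent x : (g (i, x)).1 = (g (i, parent x)).1.
  have [-> // | x_neq] := eqVneq (parent x) x.
  have : bs_adj (g (i, x)) (g (i, parent x)).
    by rewrite g_aut bs_adjE /= subrr /lift_adj eq_sym (negbTE x_neq) !eqxx.
  rewrite bs_adjE !gq /lift_adj (inj_eq perm_inj) eq_sym (negbTE x_neq) subr_eq0.
  by case/andP=> /eqP->.
have parent_root x : parent (parent x) = le.
  by apply/eqP; move: x; apply/all_lettersP.
by move=> x; rewrite to_parent (to_parent (parent x)) parent_root.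
Qed.

Lemma aut_part_pres_prod g : is_bs_aut g -> part_pres g ->
  exists p q, g = prod_perm p q.
Proof.
move=> g_aut /part_pres_letter_perm[q gq].
have gE i x : g (i, x) = ((g (i, le)).1, q x).
  by rewrite [LHS]surjective_pairing (aut_index_letter_free g_aut gq) gq.
have p_inj : injective (fun i => (g (i, le)).1).
  move=> i j /= gij.
  by have /perm_inj[] : g (i, le) = g (j, le) by rewrite [LHS]gE [RHS]gE gij.
by exists (perm p_inj), q; apply/permP => -[i x]; rewrite prod_permE permE gE.
Qed.

Lemma prod_perm_aut_affine p q : is_bs_aut (prod_perm p q) ->
  forall i, p i = (p 1 - p 0) * i + p 0.
Proof.
move=> pq_aut; apply: (@affine_of_pm_steps _ _ (loop_volt (q la))) => // [|i].
  exact: perm_inj.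
have := pq_aut (i, la) (i + 1, la).
by rewrite bs_adj_prod_perm bs_adjE /= addrAC subrr add0r /lift_adj !eqxx => /andP[].
Qed.

(* The permutation of the letters accompanying phi_k; letters beyond the
   table are fixed. *)
Definition letter_map (k : 'Z_17) (x : 'I_6) : 'I_6 :=
  let table :=
    if k == 4%:R then [:: lb; la; ld; lc]
    else if k == 2%:R then [:: lc; ld; lb; la; lf; le]
    else if k == 8%:R then [:: ld; lc; la; lb; lf; le]
    else [::] in
  nth x table x.

Lemma letter_map1 x : letter_map 1 x = x.
Proof. exact: nth_nil. Qed.

Lemma letter_map_inj_check : all (fun k => all (fun x => all (fun y =>
  (letter_map k x == letter_map k y) ==> (x == y)) letters) letters) residues.
Proof. by vm_compute. Qed.

Lemma letter_map_inj k : injective (letter_map k).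
Proof.
have k_inj x y : (letter_map k x == letter_map k y) ==> (x == y).
  move: letter_map_inj_check => /all_residuesP/(_ k).
  by move=> /all_lettersP/(_ x)/all_lettersP/(_ y).
by move=> x y /eqP/(implyP (k_inj x y))/eqP.
Qed.

Definition letter_perm k : {perm 'I_6} := perm (@letter_map_inj k).

Definition signs : seq 'Z_17 := [:: 1; -1].

Lemma lift_adj_letter_map_check :
  all (fun k => all (fun d => all (fun x => all (fun y =>
    lift_adj (letter_map k x) (letter_map k y) (k * d) == lift_adj x y d)
  letters) letters) residues) kset.
Proof. by vm_compute. Qed.

Lemma lift_adj_letter_map k s x y d : k \in kset -> s \in signs ->
  lift_adj (letter_map k x) (letter_map k y) (s * (k * d)) = lift_adj x y d.
Proof.
move=> k_in s_in.
have kE : lift_adj (letter_map k x) (letter_map k y) (k * d) = lift_adj x y d.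
  apply/eqP; move: lift_adj_letter_map_check => /allP/(_ k k_in).
  by move=> /all_residuesP/(_ d)/all_lettersP/(_ x)/all_lettersP/(_ y).
by move: s_in; rewrite !inE => /orP[]/eqP->; rewrite ?mul1r ?mulN1r ?lift_adjN.
Qed.

Definition lift_aut_on (D : 'Z_17) (t : seq 'I_6) (ds : seq 'Z_17) : bool :=
  all (fun d => all (fun x : 'I_6 => all (fun y : 'I_6 =>
    lift_adj (nth la t x) (nth la t y) (D * d) == lift_adj x y d) letters) letters) ds.

(* The voltage-0 edges cut the 720 letter permutations down to the 8 tree
   automorphisms; the loops at a, b, c, d then pin down D and t. *)
Lemma lift_aut_classification_check :
  all (fun t => all (fun D => lift_aut_on D t kset ==>
         has (fun k => has (fun s => D == s * k) signs
                       && (t == map (letter_map k) letters)) kset) residues)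
    [seq t <- permutations letters | lift_aut_on 0 t [:: 0]].
Proof. by vm_compute. Qed.

Lemma lift_aut_classify D (q : {perm 'I_6}) :
    (forall d x y, lift_adj (q x) (q y) (D * d) = lift_adj x y d) ->
  exists k s, [/\ k \in kset, s \in signs, D = s * k & q =1 letter_map k].
Proof.
move=> q_aut; set t := map q letters.
have t_on E ds : {in ds, forall d, E * d = D * d} -> lift_aut_on E t ds.
  move=> ED; apply/allP => d /ED ED_d.
  apply/all_lettersP => x; apply/all_lettersP => y.
  by rewrite !nth_map_letters ED_d q_aut.
have t_tree : t \in [seq t <- permutations letters | lift_aut_on 0 t [:: 0]].
  rewrite mem_filter; apply/andP; split.
    by apply: t_on => d; rewrite inE => /eqP->; rewrite !mulr0.
  rewrite mem_permutations uniq_perm ?map_inj_uniq //; first exact: perm_inj.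
  by move=> x; rewrite mem_letters -(permKV q x) map_f ?mem_letters.
have t_loops : lift_aut_on D t kset by apply: t_on.
move: lift_aut_classification_check => /allP/(_ t t_tree)/all_residuesP/(_ D).
move=> /implyP/(_ t_loops).
case/hasP=> k k_in /andP[/hasP[s s_in /eqP DE] /eqP qE].
by exists k, s; split=> // x; rewrite -(nth_map_letters la q) -/t qE nth_map_letters.
Qed.

Definition signed_affine (f : 'Z_17 -> 'Z_17) (k s c : 'Z_17) : Prop :=
  [/\ k \in kset, s \in signs & forall i, f i = s * (k * i) + c].

Lemma signed_kset_check :
  all (fun k1 => all (fun k2 => all (fun s1 => all (fun s2 =>
    (s1 * k1 == s2 * k2) ==> (k1 == k2) && (s1 == s2)) signs) signs) kset) kset.
Proof. by vm_compute. Qed.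

Lemma signed_affine_uniq f k1 s1 c1 k2 s2 c2 :
    signed_affine f k1 s1 c1 -> signed_affine f k2 s2 c2 ->
  [/\ k1 = k2, s1 = s2 & c1 = c2].
Proof.
case=> k1_in s1_in f1E [k2_in s2_in f2E].
have c12 : c1 = c2 by have := f1E 0; rewrite f2E !mulr0 !add0r => ->.
have sk12 : s1 * k1 = s2 * k2 by have := f1E 1; rewrite f2E c12 !mulr1 => /addIr ->.
move: signed_kset_check => /allP/(_ k1 k1_in)/allP/(_ k2 k2_in).
move=> /allP/(_ s1 s1_in)/allP/(_ s2 s2_in).
by rewrite sk12 eqxx => /andP[/eqP-> /eqP->].
Qed.

Lemma prod_perm_aut_classify p q : is_bs_aut (prod_perm p q) ->
  exists k s, signed_affine p k s (p 0) /\ q =1 letter_map k.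
Proof.
move=> pq_aut; have p_affine := prod_perm_aut_affine pq_aut.
have q_aut d x y : lift_adj (q x) (q y) ((p 1 - p 0) * d) = lift_adj x y d.
  have := pq_aut (0, x) (d, y).
  by rewrite bs_adj_prod_perm bs_adjE /= subr0 [p d]p_affine addrK.
have [k [s [k_in s_in DE qE]]] := lift_aut_classify q_aut.
by exists k, s; split=> //; split=> // i; rewrite [p i]p_affine DE mulrA.
Qed.

Lemma signed_affine_prod_perm_aut (pi : {perm 'Z_17}) k s c :
  signed_affine pi k s c -> is_bs_aut (prod_perm pi (letter_perm k)).
Proof.
case=> k_in s_in piE [i x] [j y].
rewrite bs_adj_prod_perm bs_adjE /= !permE !piE.
rewrite opprD addrACA subrr addr0 -!mulrBr.
exact: lift_adj_letter_map.
Qed.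

Lemma is_prod_signed_affine pi alpha k : is_prod pi alpha k ->
  exists s c, signed_affine pi k s c /\ alpha =1 (fun j => s * j + c).
Proof.
case=> [[s [c [s_pm alphaE]]] [k_in piE]].
exists s, c; split=> //; split=> // [|i]; last by rewrite piE alphaE.
by case: s_pm => ->; rewrite !inE eqxx ?orbT.
Qed.

Lemma signed_affine_in_P pi k s c : signed_affine pi k s c -> in_P pi.
Proof.
case=> k_in s_in piE; exists (fun j => s * j + c), k; split; last by split.
exists s, c; split=> //.
by move: s_in; rewrite !inE => /orP[]/eqP->; [left | right].
Qed.

Lemma aut_part_pres_classify g : is_bs_aut g -> part_pres g ->
  exists p k s, g = prod_perm p (letter_perm k) /\ signed_affine p k s (p 0).
Proof.
move=> g_aut g_pres; have [p [q gE]] := aut_part_pres_prod g_aut g_pres.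
rewrite gE in g_aut; have [k [s [p_aff qE]]] := prod_perm_aut_classify g_aut.
exists p, k, s; split=> //; rewrite gE; congr prod_perm.
by apply/permP => x; rewrite permE qE.
Qed.

Lemma aut_induces_classify g (pi : {perm 'Z_17}) :
    is_bs_aut g -> part_pres g -> induces g pi ->
  exists k s, g = prod_perm pi (letter_perm k) /\ signed_affine pi k s (pi 0).
Proof.
move=> g_aut g_pres g_pi.
have [p [k [s [gE p_aff]]]] := aut_part_pres_classify g_aut g_pres.
have p_pi : p = pi.
  by apply/permP => i; apply: H_inj; rewrite -g_pi gE prod_perm_H.
by exists k, s; rewrite -p_pi.
Qed.

Lemma aut_induced_in_P g : is_bs_aut g -> part_pres g ->
  exists pi : {perm 'Z_17}, induces g pi /\ in_P pi.
Proof.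
move=> g_aut g_pres.
have [p [k [s [-> p_aff]]]] := aut_part_pres_classify g_aut g_pres.
by exists p; split; [exact: prod_perm_H | exact: signed_affine_in_P p_aff].
Qed.

Lemma induced_aut_uniq g1 g2 (pi : {perm 'Z_17}) :
  is_bs_aut g1 -> part_pres g1 -> induces g1 pi ->
  is_bs_aut g2 -> part_pres g2 -> induces g2 pi -> g1 = g2.
Proof.
move=> g1_aut g1_pres g1_pi g2_aut g2_pres g2_pi.
have [k1 [s1 [-> pi_aff1]]] := aut_induces_classify g1_aut g1_pres g1_pi.
have [k2 [s2 [-> pi_aff2]]] := aut_induces_classify g2_aut g2_pres g2_pi.
by have [-> _ _] := signed_affine_uniq pi_aff1 pi_aff2.
Qed.

Lemma aut_Part_letter_map g (pi : {perm 'Z_17}) alpha k :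
  is_bs_aut g -> part_pres g -> induces g pi -> is_prod pi alpha k ->
  forall x, g @: Part x = Part (letter_map k x).
Proof.
move=> g_aut g_pres g_pi /is_prod_signed_affine[s [c [pi_aff _]]].
have [k' [s' [-> pi_aff']]] := aut_induces_classify g_aut g_pres g_pi.
have [-> _ _] := signed_affine_uniq pi_aff' pi_aff.
by move=> x; rewrite prod_perm_Part permE.
Qed.

Theorem propositionA1 :
  (* partition-preserving automorphisms permute the H_i, via a permutation of the required form *)
  (forall g : {perm V}, is_bs_aut g -> part_pres g ->
     exists pi : {perm 'Z_17}, induces g pi /\ in_P pi)
  (* the correspondence is injective *)
  /\ (forall (g1 g2 : {perm V}) (pi : {perm 'Z_17}),
        is_bs_aut g1 -> part_pres g1 -> induces g1 pi ->
        is_bs_aut g2 -> part_pres g2 -> induces g2 pi -> g1 = g2)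
  (* and surjective onto the permutations alpha phi_k *)
  /\ (forall pi : {perm 'Z_17}, in_P pi ->
        exists g : {perm V}, [/\ is_bs_aut g, part_pres g & induces g pi])
  (* the decomposition alpha phi_k is unique *)
  /\ (forall (pi : 'Z_17 -> 'Z_17) alpha1 k1 alpha2 k2,
        is_prod pi alpha1 k1 -> is_prod pi alpha2 k2 ->
        k1 = k2 /\ alpha1 =1 alpha2)
  (* action on the parts A..F *)
  /\ (forall (g : {perm V}) (pi : {perm 'Z_17}) alpha k,
        is_bs_aut g -> part_pres g -> induces g pi -> is_prod pi alpha k ->
        (k = 1 -> forall x, g @: Part x = Part x) /\
        (k = 4%:R ->
              [/\ g @: Part la = Part lb, g @: Part lb = Part la,
                  g @: Part lc = Part ld & g @: Part ld = Part lc] /\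
              g @: Part le = Part le /\ g @: Part lf = Part lf) /\
        ((k = 2%:R \/ k = 8%:R) ->
              [/\ g @: Part le = Part lf, g @: Part lf = Part le,
                  g @: (Part la :|: Part lb) = Part lc :|: Part ld &
                  g @: (Part lc :|: Part ld) = Part la :|: Part lb])).
Proof.
split; first exact: aut_induced_in_P.
split; first exact: induced_aut_uniq.
split.
  move=> pi [alpha [k /is_prod_signed_affine[s [c [pi_aff _]]]]].
  exists (prod_perm pi (letter_perm k)); split; last exact: prod_perm_H.
    exact: signed_affine_prod_perm_aut pi_aff.
  by move=> x; exists (letter_perm k x); exact: prod_perm_Part.
split.
  move=> pi alpha1 k1 alpha2 k2.
  move=> /is_prod_signed_affine[s1 [c1 [pi_aff1 alpha1E]]].
  move=> /is_prod_signed_affine[s2 [c2 [pi_aff2 alpha2E]]].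
  have [-> s12 c12] := signed_affine_uniq pi_aff1 pi_aff2.
  by split=> // j; rewrite alpha1E alpha2E s12 c12.
move=> g pi alpha k g_aut g_pres g_pi pi_prod.
have gPart := aut_Part_letter_map g_aut g_pres g_pi pi_prod.
split; first by move=> k1 x; rewrite gPart k1 letter_map1.
split; first by move=> k4; rewrite !gPart k4.
by case=> k28; rewrite !imsetU !gPart k28; split=> //; rewrite setUC.
Qed.
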